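(* Fix a positive odd integer $n$. There exists an integer $C_n$ such that for every prime $p>C_n$ and every $p$-th Fourier coefficient $a_p$ with $[\mathbb Q(a_p):\mathbb Q]=n$, there is a maximal ideal $\mathfrak l$ of $\bar{\mathbb Z}$ whose residue characteristic is different from $p$ and such that $(a_p+p+1)(a_p-p-1)\in\mathfrak l$.
   Context: $\bar{\mathbb Z}$ is the ring of algebraic integers. For a prime $p$, an element $a_p\in\bar{\mathbb Q}$ is called a $p$-th Fourier coefficient if (i) $a_p\in\bar{\mathbb Z}$, (ii) $a_p$ is totally real, and (iii) $|\sigma(a_p)|\le 2\sqrt p$ for every embedding $\sigma:\mathbb Q(a_p)\hookrightarrow\mathbb R$. *)

From mathcomp Require Import all_boot all_order all_algebra all_field.
Set Implicit Arguments. Unset Strict Implicit. Unset Printing Implicit Defensive.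
Import Order.TTheory GRing.Theory Num.Theory.
Local Open Scope ring_scope.

(* Embeddings of Q(a) into C are exactly restrictions of ring morphisms algC -> algC
   (every embedding of a number field into algC extends to an automorphism of algC). *)
Definition fourier_coeff (p : nat) (a : algC) : Prop :=
  [/\ a \in Aint,
      (forall s : {rmorphism algC -> algC}, s a \is Num.real) &
      (forall s : {rmorphism algC -> algC}, `|s a| <= 2 * sqrtC p%:R)].

Definition deg_over_Q (a : algC) : nat := (size (minCpoly a)).-1.

Definition Zbar_ideal (I : algC -> Prop) : Prop :=
  [/\ forall x, I x -> x \in Aint,
      I 0,
      (forall x y, I x -> I y -> I (x + y)) &
      (forall r x, r \in Aint -> I x -> I (r * x))].

Definition Zbar_maximal_ideal (I : algC -> Prop) : Prop :=
  [/\ Zbar_ideal I, ~ I 1 &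
      forall J, Zbar_ideal J -> (forall x, I x -> J x) -> J 1 \/ (forall x, J x -> I x)].

(* The residue field Zbar/I has characteristic l (l prime) iff l lies in I
   (for a proper ideal). *)
Definition residue_char (I : algC -> Prop) (l : nat) : Prop :=
  prime l /\ I l%:R.

(* If (a + p + 1)(a - p - 1) divided a power of p in Zbar, then, applying the
   automorphisms of algC, so would q - b and q + b for every conjugate b of a,
   where q = p + 1.  With f the minimal polynomial of a, the positive integers
   f(q) = prod (q - b) and -f(-q) = prod (q + b) would be powers of p; as
   |b| <= 2 sqrt p and p > 36 n^2, each of their n factors lies within p/(2n)
   of p, so both equal p^n.  Since f(q) - f(-q) is divisible by 2q, this gives
   p + 1 | p^n, which is absurd.  Hence (a + p + 1)(a - p - 1) divides no power
   of p; by Zorn, an ideal maximal among those containing it and no power of p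
   is prime, it contains a nonzero integer and hence a prime l <> p, and
   nonzero prime ideals of Zbar are maximal. *)

From HB Require Import structures.
From mathcomp Require Import all_boot all_order all_algebra all_field.
From mathcomp Require Import boolp classical_sets.
From mathcomp Require Import zify ring.

Set Implicit Arguments.
Unset Strict Implicit.
Unset Printing Implicit Defensive.

Import Order.TTheory GRing.Theory Num.Theory.
Local Open Scope ring_scope.

(* The roots of [minCpoly a] generate a normal number field [L]; the root [b] is
   an image of [a] under some automorphism of [L], which extends to [algC]. *)
Lemma minCpoly_root_aut (a b : algC) : root (minCpoly a) b ->
  exists nu : {rmorphism algC -> algC}, nu a = b.
Proof.
move=> rb; have [r Dr] := closed_field_poly_normal (minCpoly a).
rewrite (monicP (minCpoly_monic a)) scale1r in Dr.
have [Qr [QrC [rr Drr genQr]]] := num_field_exists r.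
have [p [Dp _] minp] := minCpolyP a.
pose pr := map_poly (in_alg Qr) p.
have QrC_pr q : map_poly QrC (map_poly (in_alg Qr) q) = map_poly ratr q.
  rewrite -map_poly_comp; apply: eq_map_poly => c.
  by rewrite /= rmorphZ_num rmorph1 mulr1.
have splitQr : splittingFieldFor 1 pr fullv.
  exists rr => //; congr (_ %= _): (eqpxx pr); apply/(map_poly_inj QrC).
  rewrite QrC_pr -Dp Dr -Drr big_map rmorph_prod /=; apply: eq_bigr => z _.
  by rewrite map_polyXsubC.
have Qr_ax : FieldExt_isSplittingField _ Qr.
  constructor; exists pr => //.
  by apply/polyOverP=> i; rewrite coef_map memvZ ?memv_line.
pose L := HB.pack_for (splittingFieldType rat) Qr Qr_ax.
have : a \in map QrC rr by rewrite Drr -root_prod_XsubC -Dr root_minCpoly.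
have : b \in map QrC rr by rewrite Drr -root_prod_XsubC -Dr.
case/mapP=> b' _ Db; case/mapP=> a' _ Da.
have : root (minPoly 1 (a' : L)) (b' : L).
  set mp := minPoly 1 (a' : L).
  have mp_i i : mp`_i \in 1%VS by apply/polyOverP; apply: minPolyOver.
  have c_ i := sig_eqW (vlineP _ _ (mp_i i)).
  pose q := \poly_(i < size mp) sval (c_ i).
  have Dq : map_poly QrC mp = map_poly ratr q.
    apply/polyP=> i; rewrite !coef_map coef_poly /=.
    case: ifP => [_|/negbT]; last first.
      by rewrite -leqNgt => /(nth_default 0) ->; rewrite !rmorph0.
    by case: (c_ i) => c /= ->; rewrite alg_num_field fmorph_rat.
  have : root (map_poly ratr q) a by rewrite -Dq Da fmorph_root root_minPoly.
  rewrite minp => /dvdpP[t Dt].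
  by rewrite -(fmorph_root QrC) -Db Dq Dt rmorphM rootM /= -Dp rb orbT.
case/(normalField_root_minPoly (sub1v _) (normalFieldf 1) (memvf _))=> g _ Dg.
have [nu Dnu] := extend_algC_subfield_aut (QrC : {rmorphism L -> algC}) g.
by exists nu; rewrite Da Db -Dnu /= Dg.
Qed.

Definition Zbar_prime_ideal (I : algC -> Prop) : Prop :=
  [/\ Zbar_ideal I, ~ I 1 &
      forall y z, y \in Aint -> z \in Aint -> I (y * z) -> I y \/ I z].

Section ZbarIdealTheory.

Variable I : algC -> Prop.
Hypothesis idealI : Zbar_ideal I.

Lemma Zbar_ideal_Aint x : I x -> x \in Aint.
Proof. by case: idealI => + _ _ _; apply. Qed.

Lemma Zbar_ideal0 : I 0.
Proof. by case: idealI. Qed.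

Lemma Zbar_idealD x y : I x -> I y -> I (x + y).
Proof. by case: idealI => _ _ + _; apply. Qed.

Lemma Zbar_idealMl r x : r \in Aint -> I x -> I (r * x).
Proof. by case: idealI => _ _ _; apply. Qed.

Lemma Zbar_idealMr r x : r \in Aint -> I x -> I (x * r).
Proof. by rewrite mulrC; apply: Zbar_idealMl. Qed.

Lemma Zbar_idealN x : I x -> I (- x).
Proof. by rewrite -mulN1r; apply: Zbar_idealMl; rewrite rpredN Aint1. Qed.

Lemma Zbar_idealB x y : I x -> I y -> I (x - y).
Proof. by move=> Ix Iy; apply: Zbar_idealD Ix (Zbar_idealN Iy). Qed.

End ZbarIdealTheory.

Lemma Zbar_ideal_zero : Zbar_ideal (fun z => z = 0).
Proof.
split=> //; first by move=> _ ->; apply: Aint0.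
- by move=> _ _ -> ->; rewrite addr0.
- by move=> r _ _ ->; rewrite mulr0.
Qed.

Lemma Zbar_prime_ideal_zero : Zbar_prime_ideal (fun z => z = 0).
Proof.
split; first exact: Zbar_ideal_zero.
- by move/eqP; rewrite oner_eq0.
- by move=> y z _ _ /eqP; rewrite mulf_eq0 => /orP[] /eqP; [left | right].
Qed.

Lemma Aint_horner (f : {poly algC}) y :
  f \is a polyOver Num.int -> y \in Aint -> f.[y] \in Aint.
Proof. by move=> fZ yA; apply/rpred_horner/yA/(polyOverS _ fZ)/Aint_Cint. Qed.

(* Reducing the integral equation of [y] modulo [I], the lowest coefficient
   outside [I] yields the integer [c]. *)
Lemma Zbar_prime_ideal_int_cong I y : Zbar_prime_ideal I -> y \in Aint -> ~ I y ->
  exists (c : int) (t : algC), [/\ t \in Aint, ~ I c%:~R & I (c%:~R + t * y)].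
Proof.
move=> [idI notI1 primeI] yA notIy.
suff int_poly_cong f : f \is a polyOver Num.int -> I f.[y] ->
    (exists i, ~ I f`_i) ->
  exists (c : int) (t : algC), [/\ t \in Aint, ~ I c%:~R & I (c%:~R + t * y)].
  apply: (int_poly_cong (minCpoly y)); first by move: yA; rewrite unfold_in.
    by rewrite (rootP (root_minCpoly y)); apply: Zbar_ideal0.
  exists (size (minCpoly y)).-1.
  by rewrite -lead_coefE (monicP (minCpoly_monic y)).
elim/poly_ind: f => [|g c IHg] fZ Ify [i notIfi].
  by case: notIfi; rewrite coef0; apply: Zbar_ideal0.
have coef_f j : (g * 'X + c%:P)`_j = if j is j'.+1 then g`_j' else c.
  by rewrite coefD coefMX coefC; case: j => [|j] /=; rewrite ?add0r ?addr0.
have gZ : g \is a polyOver Num.int.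
  by apply/polyOverP => j; have := polyOverP fZ j.+1; rewrite coef_f.
rewrite hornerMXaddC in Ify.
have [Ic | notIc] := pselect (I c); last first.
  have /intrP[m Dc] : c \is a Num.int by have := polyOverP fZ 0; rewrite coef_f.
  by exists m, g.[y]; rewrite -Dc addrC Aint_horner.
have Igy : I (g.[y] * y) by rewrite -[_ * y](addrK c); apply: Zbar_idealB.
have [Ig | //] := primeI _ _ (Aint_horner gZ yA) yA Igy.
apply: IHg => //; case: i notIfi => [|i]; rewrite coef_f // => notIgi.
by exists i.
Qed.

Lemma Aint_dvd_int x : x \in Aint -> x != 0 ->
  exists (c : int) (t : algC), [/\ t \in Aint, c != 0 & x * t = c%:~R].
Proof.
move=> xA x0; have [c [t [tA c0 Ec]]] :=
  Zbar_prime_ideal_int_cong Zbar_prime_ideal_zero xA (elimN eqP x0).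
exists c, (- t); split; rewrite ?rpredN //.
  by apply: contra_notN c0 => /eqP->.
by apply/eqP; rewrite mulrN mulrC eq_sym -addr_eq0 Ec.
Qed.

Lemma Zbar_ideal_nat I x : Zbar_ideal I -> x \in Aint -> x != 0 -> I x ->
  exists2 N : nat, (0 < N)%N & I N%:R.
Proof.
move=> idI xA x0 Ix; have [c [t [tA c0 Ec]]] := Aint_dvd_int xA x0.
have Ic : I c%:~R by rewrite -Ec; apply: Zbar_idealMr.
exists `|c|%N; first by rewrite absz_gt0.
case: c {c0 Ec} Ic => k //; rewrite NegzE mulrNz => /(Zbar_idealN idI).
by rewrite opprK.
Qed.

Lemma Zbar_prime_ideal_char I N : Zbar_prime_ideal I -> (0 < N)%N -> I N%:R ->
  exists l, residue_char I l.
Proof.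
move=> [idI notI1 primeI]; elim/ltn_ind: N => N IH N0 IN.
have [N1 | N_gt1] := leqP N 1.
  by case: notI1; move: IN; have -> : N = 1%N by apply/eqP; rewrite eqn_leq N1.
have [pN dvdN] := (pdiv_prime N_gt1, pdiv_dvd N).
have IpN : I ((pdiv N)%:R * (N %/ pdiv N)%:R) by rewrite -natrM mulnC divnK.
have natA m : (m%:R : algC) \in Aint by apply/Aint_Cnat/natr_nat.
have [Ip | Iq] := primeI _ _ (natA _) (natA _) IpN; first by exists (pdiv N).
apply: (IH _ _ _ Iq); first by rewrite ltn_Pdiv ?prime_gt1.
by rewrite divn_gt0 ?pdiv_gt0 // dvdn_leq.
Qed.

Lemma Zbar_prime_ideal_inv I l y : Zbar_prime_ideal I -> residue_char I l ->
  y \in Aint -> ~ I y -> exists2 t, t \in Aint & I (1 - t * y).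
Proof.
move=> primeI [pl Il] yA notIy; have [idI _ _] := primeI.
have [c [t [tA notIc Ict]]] := Zbar_prime_ideal_int_cong primeI yA notIy.
have : coprimez c l.
  rewrite coprimezE coprime_sym prime_coprime //; apply: contra_notN notIc.
  rewrite -dvdzE => /divzK <-; rewrite rmorphM /=.
  exact: Zbar_idealMl (Aint_int _) Il.
case/coprimezP=> [[u v] /= Euv]; exists (- (u%:~R * t)).
  by rewrite rpredN rpredM ?Aint_int.
have E1 : 1 = u%:~R * c%:~R + v%:~R * l%:R :> algC.
  by rewrite -[l%:R]/((l%:Z)%:~R) -!intrM -intrD Euv.
have -> : 1 - - (u%:~R * t) * y = u%:~R * (c%:~R + t * y) + v%:~R * l%:R.
  by rewrite {1}E1; ring.
exact: Zbar_idealD (Zbar_idealMl idI (Aint_int u) Ict)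
  (Zbar_idealMl idI (Aint_int v) Il).
Qed.

Lemma Zbar_prime_ideal_maximal I l : Zbar_prime_ideal I -> residue_char I l ->
  Zbar_maximal_ideal I.
Proof.
move=> primeI charI; have [idI notI1 _] := primeI.
split=> // J idJ IJ.
have [JI | ] := pselect (forall z, J z -> I z); first by right.
move=> /existsNP[y /not_implyP[Jy notIy]]; left.
have yA := Zbar_ideal_Aint idJ Jy.
have [t tA It] := Zbar_prime_ideal_inv primeI charI yA notIy.
rewrite -(subrK (t * y) 1).
exact: Zbar_idealD (IJ _ It) (Zbar_idealMl idJ tA Jy).
Qed.

Lemma Zbar_ideal_adjoin I y : Zbar_ideal I -> y \in Aint ->
  Zbar_ideal (fun z => exists m r, [/\ I m, r \in Aint & z = m + r * y]).
Proof.
move=> idI yA; split.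
- move=> _ [m [r [Im rA ->]]].
  by rewrite rpredD ?rpredM // (Zbar_ideal_Aint idI Im).
- by exists 0, 0; rewrite mul0r addr0 Aint0; split=> //; apply: Zbar_ideal0.
- move=> _ _ [m [r [Im rA ->]]] [m' [r' [Im' rA' ->]]].
  exists (m + m'), (r + r'); split; [exact: Zbar_idealD | exact: rpredD | ring].
- move=> t _ tA [m [r [Im rA ->]]].
  exists (t * m), (t * r); split; [exact: Zbar_idealMl | exact: rpredM | ring].
Qed.

(* The empty set is allowed in the Zorn family only to bound the empty chain. *)
Lemma Zbar_ideal_max_avoiding x s : x \in Aint ->
    (forall k z, z \in Aint -> x * z <> s ^+ k) ->
  exists I, [/\ Zbar_ideal I, I x, forall k, ~ I (s ^+ k) &
    forall J, Zbar_ideal J -> (forall k, ~ J (s ^+ k)) ->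
      (I `<=` J)%classic -> (J `<=` I)%classic].
Proof.
move=> xA x_ndvd.
pose good B := [/\ Zbar_ideal B, B x & forall k, ~ B (s ^+ k)].
have [A [[A0 | [idA Ax notAs]] maxA]] : exists A, (A = set0 \/ good A) /\
    forall B, (A `<` B)%classic -> ~ (B = set0 \/ good B).
- apply: Zorn_bigcup => F FP Ftot.
  have goodF X z : F X -> X z -> good X.
    by move=> FX Xz; case: (FP X FX) => // X0; rewrite X0 in Xz.
  have [[X0 [FX0 X0x]] | noX] := pselect (exists X, F X /\ X x); last first.
    left; apply/funext => z; apply/propext; split=> // -[X FX Xz].
    by case: (goodF X z FX Xz) => _ Xx _; apply: noX; exists X.
  right; rewrite /good; split.
  + split.
    * move=> z [X FX Xz]; case: (goodF X z FX Xz) => idX _ _.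
      exact: Zbar_ideal_Aint Xz.
    * exists X0 => //; case: (goodF X0 x FX0 X0x) => idX _ _.
      exact: Zbar_ideal0.
    * move=> z w [X FX Xz] [Y FY Yw].
      have [idX _ _] := goodF X z FX Xz; have [idY _ _] := goodF Y w FY Yw.
      case: (Ftot X Y FX FY) => [XY | YX].
        by exists Y => //; exact (Zbar_idealD idY (XY z Xz) Yw).
      by exists X => //; exact (Zbar_idealD idX Xz (YX w Yw)).
    * move=> r z rA [X FX Xz]; exists X => //.
      by case: (goodF X z FX Xz) => idX _ _; apply: Zbar_idealMl.
  + by exists X0.
  + by move=> k [X FX Xk]; case: (goodF X _ FX Xk) => _ _ /(_ k Xk).
- pose xZ z := exists m r, [/\ m = 0, r \in Aint & z = m + r * x].
  have idxZ : Zbar_ideal xZ := Zbar_ideal_adjoin Zbar_ideal_zero xA.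
  have [] := maxA xZ; last first.
    right; split=> //; first by exists 0, 1; rewrite add0r mul1r Aint1.
    by move=> k [m [r [-> rA /esym]]]; rewrite add0r mulrC; apply: x_ndvd.
  by rewrite A0; split=> // /(_ 0); apply; exists 0, 0; rewrite mul0r addr0 Aint0.
exists A; split=> // J idJ notJs AJ; apply: contrapT => JA.
by apply: (maxA J); [split | right; split=> //; apply: AJ].
Qed.

Lemma Zbar_max_avoiding_prime I s : s \in Aint -> Zbar_ideal I ->
    (forall k, ~ I (s ^+ k)) ->
    (forall J, Zbar_ideal J -> (forall k, ~ J (s ^+ k)) ->
      (I `<=` J)%classic -> (J `<=` I)%classic) ->
  Zbar_prime_ideal I.
Proof.
move=> sA idI notIs maxI; split=> //; first by move: (notIs 0%N); rewrite expr0.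
have adjoin_pow z : z \in Aint -> ~ I z ->
    exists k m r, [/\ I m, r \in Aint & s ^+ k = m + r * z].
  move=> zA notIz; apply: contrapT => no_pow; apply: notIz.
  apply: (maxI _ (Zbar_ideal_adjoin idI zA)).
  - by move=> k [m [r [Im rA Ek]]]; apply: no_pow; exists k, m, r.
  - by move=> u Iu; exists u, 0; rewrite mul0r addr0 Aint0.
  - by exists 0, 1; rewrite add0r mul1r Aint1; split=> //; apply: Zbar_ideal0.
move=> y w yA wA Iyw; apply: contrapT => /not_orP[notIy notIw].
have [k [m1 [r1 [Im1 rA1 E1]]]] := adjoin_pow y yA notIy.
have [j [m2 [r2 [Im2 rA2 E2]]]] := adjoin_pow w wA notIw.
apply: (notIs (k + j)%N).
have -> : s ^+ (k + j) = s ^+ j * m1 + (r1 * y) * m2 + (r1 * r2) * (y * w).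
  by rewrite exprD E1 E2; ring.
apply: (Zbar_idealD idI); first apply: (Zbar_idealD idI).
- by apply: (Zbar_idealMl idI) Im1; rewrite rpredX.
- by apply: (Zbar_idealMl idI) Im2; rewrite rpredM.
- by apply: (Zbar_idealMl idI) Iyw; rewrite rpredM.
Qed.

Lemma Zbar_maximal_ideal_avoiding x p : x \in Aint -> x != 0 ->
    (forall k z, z \in Aint -> x * z <> p%:R ^+ k) ->
  exists I, [/\ Zbar_maximal_ideal I,
    (exists l, residue_char I l /\ l <> p) & I x].
Proof.
move=> xA x0 x_ndvd.
have pA : (p%:R : algC) \in Aint by apply/Aint_Cnat/natr_nat.
have [I [idI Ix notIp maxI]] := Zbar_ideal_max_avoiding xA x_ndvd.
have primeI := Zbar_max_avoiding_prime pA idI notIp maxI.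
have [N N0 IN] := Zbar_ideal_nat idI xA x0 Ix.
have [l charI] := Zbar_prime_ideal_char primeI N0 IN.
exists I; split=> //; first exact: Zbar_prime_ideal_maximal charI.
by exists l; split=> // lp; apply: (notIp 1%N); rewrite expr1 -lp; case: charI.
Qed.

Lemma bernoulli_expn m k : (k <= m)%N -> (m ^ k * (m - k) <= (m - 1) ^ k * m)%N.
Proof.
elim: k => [|k IHk] km; first by rewrite !expn0 subn0 mul1n.
have IH := IHk (ltnW km).
have step : (m * (m - k.+1) <= (m - 1) * (m - k))%N by move: km; clear; nia.
rewrite !expnS; apply: leq_trans (_ : (m - 1) * (m ^ k * (m - k)) <= _)%N.
  by rewrite -mulnA mulnCA [X in (_ <= X)%N]mulnCA leq_mul2l step orbT.
by rewrite -mulnA leq_mul2l IH orbT.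
Qed.

Lemma expn_double_le n : (0 < n)%N -> ((n.*2) ^ n <= 2 * (n.*2 - 1) ^ n)%N.
Proof.
move=> n0; have := @bernoulli_expn n.*2 n.
rewrite -addnn addnK leq_addr => /(_ isT); rewrite -(leq_pmul2r n0).
set X := ((n + n) ^ n)%N; set Y := ((n + n - 1) ^ n)%N; nia.
Qed.

Lemma expn_doubleS_le n : (0 < n)%N -> ((n.*2).+1 ^ n <= 2 * (n.*2) ^ n)%N.
Proof.
move=> n0; have le2 := expn_double_le n0.
have : ((n.*2).+1 ^ n * (n.*2 - 1) ^ n <= (n.*2) ^ n * (n.*2) ^ n)%N.
  by rewrite -!expnMn leq_exp2r //; move: n0; clear; nia.
have : (0 < (n.*2) ^ n)%N by rewrite expn_gt0 double_gt0 n0.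
set X := ((n.*2) ^ n)%N; set Y := ((n.*2 - 1) ^ n)%N; set Z := ((n.*2).+1 ^ n)%N.
nia.
Qed.

Lemma eq_expn_within2 p i n : (2 < p)%N ->
  (p ^ n <= 2 * p ^ i)%N -> (p ^ i <= 2 * p ^ n)%N -> i = n.
Proof.
move=> p2 le_n le_i; have p1 : (1 < p)%N by apply: ltnW.
have grow j j' : (j < j')%N -> (3 * p ^ j <= p ^ j')%N.
  rewrite -(leq_exp2l _ _ p1) => /(leq_trans _); apply.
  by rewrite expnS leq_mul2r p2 orbT.
have pos j : (0 < p ^ j)%N by rewrite expn_gt0 (ltnW p1).
have := pos i; have := pos n.
by case: (ltngtP i n) => // [/grow | /grow]; lia.
Qed.

Lemma prodr_const_seq (R : pzSemiRingType) (I : Type) (r : seq I) (c : R) :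
  \prod_(i <- r) c = c ^+ size r.
Proof. by rewrite big_const_seq count_predT iter_mulr_1. Qed.

Lemma prod_Aint_dvd (r : seq algC) (F : algC -> algC) (K : algC) :
    (forall b, b \in r -> exists2 w, w \in Aint & F b * w = K) ->
  exists2 W, W \in Aint & \prod_(b <- r) F b * W = K ^+ size r.
Proof.
elim: r => [|b r IHr] dvdF; first by exists 1; rewrite ?Aint1 // big_nil mulr1.
have [W WA EW] : exists2 W, W \in Aint & \prod_(c <- r) F c * W = K ^+ size r.
  by apply: IHr => c cr; apply: dvdF; rewrite inE cr orbT.
have [w wA Ew] := dvdF b (mem_head _ _).
by exists (w * W); rewrite ?rpredM // big_cons exprS -EW -Ew; ring.
Qed.

Lemma natr_dvd_pexp (N W : algC) (p K : nat) : prime p -> N \is a Num.nat ->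
  W \in Aint -> N * W = p%:R ^+ K -> exists i, N = (p ^ i)%:R.
Proof.
move=> pp /natrP[m ->] WA E.
have pK0 : p%:R ^+ K != 0 :> algC.
  by rewrite expf_neq0 // pnatr_eq0 -lt0n prime_gt0.
have m0 : m%:R != 0 :> algC by apply: contraNneq pK0 => m0; rewrite -E m0 mul0r.
have /natrP[w Dw] : W \is a Num.nat.
  have DW : W = p%:R ^+ K / m%:R by rewrite -E [_ * W]mulrC mulfK.
  rewrite natrEint Cint_rat_Aint //= ?DW ?divr_ge0 ?exprn_ge0 ?ler0n //.
  by rewrite rpred_div ?rpredX ?rpred_nat.
move: E; rewrite Dw -natrM -natrX => /eqP; rewrite eqr_nat => /eqP E.
have /(dvdn_pfactor _ _ pp)[i _ ->] : (m %| p ^ K)%N by rewrite -E dvdn_mulr.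
by exists i.
Qed.

Section ProductNearPower.

Variables (n p : nat) (r : seq algC) (F : algC -> algC).
Hypotheses (n_gt0 : (0 < n)%N) (p_gt2 : (2 < p)%N) (size_r : size r = n).
Hypothesis F_near_p : forall b, b \in r ->
  ((n.*2 - 1) * p)%:R <= (n.*2)%:R * F b <= ((n.*2).+1 * p)%:R.

Lemma prod_near_pexp i : \prod_(b <- r) F b = (p ^ i)%:R -> i = n.
Proof.
move=> Ei.
have prod_const (c : algC) : c ^+ n = \prod_(b <- r) c.
  by rewrite prodr_const_seq size_r.
have scaled : \prod_(b <- r) ((n.*2)%:R * F b) = ((n.*2) ^ n * p ^ i)%:R.
  by rewrite big_split /= prodr_const_seq Ei size_r natrM -natrX.
have lo : (((n.*2 - 1) * p) ^ n <= (n.*2) ^ n * p ^ i)%N.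
  rewrite -(ler_nat algC) -scaled natrX prod_const !big_seq.
  by apply: ler_prod => b /F_near_p/andP[lo_b _]; rewrite ler0n.
have hi : ((n.*2) ^ n * p ^ i <= ((n.*2).+1 * p) ^ n)%N.
  rewrite -(ler_nat algC) -scaled natrX prod_const !big_seq.
  apply: ler_prod => b /F_near_p/andP[lo_b ->]; rewrite andbT.
  exact: le_trans (ler0n _ _) lo_b.
have X0 : (0 < (n.*2) ^ n)%N by rewrite expn_gt0 double_gt0 n_gt0.
move: lo hi X0 (expn_double_le n_gt0) (expn_doubleS_le n_gt0); rewrite !expnMn.
set X := ((n.*2) ^ n)%N; set Y := ((n.*2 - 1) ^ n)%N; set Z := ((n.*2).+1 ^ n)%N.
by move=> *; apply: eq_expn_within2 p_gt2 _ _; nia.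
Qed.

Lemma prod_dvd_pexp_eq k : prime p ->
    (forall b, b \in r -> exists2 w, w \in Aint & F b * w = p%:R ^+ k) ->
  \prod_(b <- r) F b \is a Num.int -> \prod_(b <- r) F b = (p ^ n)%:R.
Proof.
move=> pp dvdF prodZ; have [W WA EW] := prod_Aint_dvd dvdF.
have F_gt0 b : b \in r -> 0 < F b.
  have M0 : 0 < (n.*2)%:R :> algC by rewrite ltr0n double_gt0.
  move=> /F_near_p/andP[lo_b _]; rewrite -(pmulr_rgt0 _ M0).
  apply: lt_le_trans lo_b.
  by rewrite ltr0n; move: n_gt0 p_gt2; clear; nia.
have prodN : \prod_(b <- r) F b \is a Num.nat.
  by rewrite natrEint prodZ ltW // big_seq prodr_gt0.
rewrite -exprM in EW; have [i Ei] := natr_dvd_pexp pp prodN WA EW.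
by rewrite Ei (prod_near_pexp Ei).
Qed.

End ProductNearPower.

Lemma horner_subr_int (f : {poly algC}) u v : f \is a polyOver Num.int ->
    u \is a Num.int -> v \is a Num.int ->
  exists2 D, D \is a Num.int & f.[u] - f.[v] = (u - v) * D.
Proof.
move=> fZ uZ vZ.
exists (\sum_(i < size f) f`_i * \sum_(j < i) u ^+ (i.-1 - j) * v ^+ j).
  apply: rpred_sum => i _; rewrite rpredM ?(polyOverP fZ) // rpred_sum // => j _.
  by rewrite rpredM ?rpredX.
rewrite !horner_coef -sumrB mulr_sumr; apply: eq_bigr => i _.
by rewrite -mulrBr subrXX mulrCA.
Qed.

Lemma horner_prod_XsubC_N (r : seq algC) x :
  (\prod_(b <- r) ('X - b%:P)).[- x] = (-1) ^+ size r * \prod_(b <- r) (x + b).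
Proof.
rewrite horner_prod -prodr_const_seq -big_split /=.
by apply: eq_bigr => b _; rewrite hornerXsubC mulN1r opprD.
Qed.

Lemma int_poly_pexp_at_pS (f : {poly algC}) (p n : nat) :
    f \is a polyOver Num.int -> (0 < p)%N ->
  f.[p%:R + 1] = (p ^ n)%:R -> f.[- (p%:R + 1)] = - (p ^ n)%:R -> False.
Proof.
move=> fZ p_gt0; set q : algC := p%:R + 1 => f_q f_Nq.
have qZ : q \is a Num.int by rewrite rpredD ?rpred1 ?natr_int.
have NqZ : - q \is a Num.int by rewrite rpredN.
have [D DZ ED] := horner_subr_int fZ qZ NqZ.
have EpD : (p ^ n)%:R = q * D.
  have two_neq0 : 2 != 0 :> algC by rewrite pnatr_eq0.
  apply: (mulfI two_neq0); transitivity (f.[q] - f.[- q]).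
    by rewrite f_q f_Nq; ring.
  by rewrite ED; ring.
have /natrP[d Dd] : D \is a Num.nat.
  by rewrite natrEint DZ /= -(@pmulr_rge0 _ q) -?EpD ?ler0n // /q natr1 ltr0n.
have /gcdn_idPl : (p.+1 %| p ^ n)%N.
  apply/dvdnP; exists d; apply/eqP.
  by rewrite -(eqr_nat algC) natrM -natr1 -/q EpD Dd mulrC.
have cop : coprime p.+1 (p ^ n) by rewrite coprimeXr // coprimeSn.
by rewrite (eqP cop) => /succn_inj p0; rewrite -p0 in p_gt0.
Qed.

Lemma Weil_bound_shift (n p : nat) (c : algC) : (0 < n)%N -> (36 * n ^ 2 < p)%N ->
    c \is Num.real -> `|c| <= 2 * sqrtC p%:R ->
  ((n.*2 - 1) * p)%:R <= (n.*2)%:R * (p%:R + 1 - c) <= ((n.*2).+1 * p)%:R.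
Proof.
move=> n0 np cR cB; set s := sqrtC (p%:R : algC).
have s_ge6n : (6 * n)%:R <= s.
  rewrite -[X in X <= _]sqrCK ?ler0n // ler_sqrtC ?qualifE /= ?exprn_ge0 //.
  by rewrite -natrX ler_nat expnMn ltnW.
have s_ge1 : 1 <= s by apply: le_trans s_ge6n; rewrite ler1n muln_gt0 n0.
have shift_small : `|(n.*2)%:R * (1 - c)| <= p%:R.
  rewrite normrM normr_nat -(sqrtCK p%:R) -/s.
  apply: le_trans (_ : (n.*2)%:R * (1 + 2 * s) <= _).
    by rewrite ler_wpM2l ?ler0n // (le_trans (ler_normB _ _)) // normr1 lerD2l.
  apply: le_trans (_ : (6 * n)%:R * s <= _).
    2: by rewrite expr2 ler_wpM2r ?sqrtC_ge0 ?ler0n.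
  have -> : (6 * n)%:R * s = (n.*2)%:R * s + (n.*2)%:R * (2 * s).
    by rewrite -mul2n !natrM; ring.
  by rewrite mulrDr lerD2r mulr1 ler_pMr ?ltr0n ?double_gt0.
move: shift_small; rewrite real_ler_norml ?rpredM ?rpredB ?realn ?real1 //.
case/andP=> lo hi; rewrite addrAC -addrA [- c + 1]addrC mulrDr mulnBl mul1n.
rewrite natrB ?leq_pmull ?double_gt0 //.
by rewrite mulSn natrD natrM [_ + _ * p%:R]addrC !lerD2l lo hi.
Qed.

Lemma fourier_coeff_aut p a (nu : {rmorphism algC -> algC}) :
  fourier_coeff p a -> fourier_coeff p (nu a).
Proof.
case=> aA aR aB; split=> [|s|s]; rewrite ?Aint_aut //.
- exact: (aR (s \o nu)).
- exact: (aB (s \o nu)).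
Qed.

Lemma fourier_coeff_shift_neq0 p a : (1 < p)%N -> fourier_coeff p a ->
  (a + p%:R + 1) * (a - p%:R - 1) != 0.
Proof.
move=> p_gt1 [_ _ /(_ idfun) /= aB].
set s := sqrtC (p%:R : algC).
have s_neq1 : s != 1.
  apply: contraTneq p_gt1 => s1.
  have : p%:R == 1 :> algC by rewrite -(sqrtCK p%:R) -/s s1 expr1n.
  by rewrite pnatr_eq1 => /eqP->.
have norm_a : `|a| < p%:R + 1.
  apply: le_lt_trans aB _; rewrite -subr_gt0.
  have -> : p%:R + 1 - 2 * s = (s - 1) ^+ 2 by rewrite sqrrB1 sqrtCK mulr2n; ring.
  by rewrite real_exprn_even_gt0 ?rpredB ?sqrtC_real ?ler0n ?real1 //= subr_eq0.
have q_ge0 : 0 <= p%:R + 1 :> algC by rewrite addr_ge0 ?ler0n.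
rewrite mulf_neq0 // -addrA ?addr_eq0 -?opprD ?subr_eq0;
  by apply: contraTneq norm_a => ->; rewrite ?normrN ger0_norm ?ltxx.
Qed.

Lemma fourier_coeff_shift_near n p b : (0 < n)%N -> (36 * n ^ 2 < p)%N ->
    fourier_coeff p b ->
     ((n.*2 - 1) * p)%:R <= (n.*2)%:R * (p%:R + 1 - b) <= ((n.*2).+1 * p)%:R
  /\ ((n.*2 - 1) * p)%:R <= (n.*2)%:R * (p%:R + 1 + b) <= ((n.*2).+1 * p)%:R.
Proof.
move=> n0 np [_ /(_ idfun) /= bR /(_ idfun) /= bB].
rewrite -[in _ + 1 + b](opprK b).
by split; apply: Weil_bound_shift; rewrite ?rpredN ?normrN.
Qed.

Lemma shift_dvd_pexp_aut (nu : {rmorphism algC -> algC}) (p k : nat) a z :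
    a \in Aint -> z \in Aint -> (a + p%:R + 1) * (a - p%:R - 1) * z = p%:R ^+ k ->
     (exists2 w, w \in Aint & (p%:R + 1 - nu a) * w = p%:R ^+ k)
  /\ (exists2 w, w \in Aint & (p%:R + 1 + nu a) * w = p%:R ^+ k).
Proof.
move=> aA zA /(congr1 nu).
rewrite rmorphXn !rmorphM !rmorphB !rmorphD rmorph1 rmorph_nat => Enu.
have qA : p%:R + 1 \in Aint by apply/rpredD/Aint1/Aint_Cnat/natr_nat.
have wA c : c \in Aint -> - c * nu z \in Aint.
  by move=> cA; apply/rpredM; rewrite ?rpredN ?Aint_aut.
split; [exists (- (p%:R + 1 + nu a) * nu z)
      | exists (- (p%:R + 1 - nu a) * nu z)].
- by apply: wA; rewrite rpredD ?Aint_aut.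
- by rewrite -Enu; ring.
- by apply: wA; rewrite rpredB ?Aint_aut.
- by rewrite -Enu; ring.
Qed.

Lemma fourier_coeff_shift_ndvd_pexp n p a k z : odd n -> prime p ->
    (36 * n ^ 2 < p)%N -> fourier_coeff p a -> deg_over_Q a = n -> z \in Aint ->
  (a + p%:R + 1) * (a - p%:R - 1) * z <> p%:R ^+ k.
Proof.
move=> n_odd pp np fa deg zA Ez; have [aA _ _] := fa; have n_gt0 := odd_gt0 n_odd.
have p_gt2 : (2 < p)%N by apply: leq_trans np; move: n_gt0; clear; nia.
pose q : algC := p%:R + 1.
have [r Dr] := closed_field_poly_normal (minCpoly a).
rewrite (monicP (minCpoly_monic a)) scale1r in Dr.
have size_r : size r = n by move: deg; rewrite /deg_over_Q Dr size_prod_XsubC.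
have conj b : b \in r -> exists nu : {rmorphism algC -> algC}, nu a = b.
  by move=> br; apply: minCpoly_root_aut; rewrite Dr root_prod_XsubC.
have near_p b : b \in r ->
    ((n.*2 - 1) * p)%:R <= (n.*2)%:R * (q - b) <= ((n.*2).+1 * p)%:R
 /\ ((n.*2 - 1) * p)%:R <= (n.*2)%:R * (q + b) <= ((n.*2).+1 * p)%:R.
  by case/conj=> nu <-; apply/fourier_coeff_shift_near/fourier_coeff_aut.
have dvd_pk b : b \in r ->
    (exists2 w, w \in Aint & (q - b) * w = p%:R ^+ k)
 /\ (exists2 w, w \in Aint & (q + b) * w = p%:R ^+ k).
  by case/conj=> nu <-; exact: shift_dvd_pexp_aut aA zA Ez.
have fZ : minCpoly a \is a polyOver Num.int by move: aA; rewrite unfold_in.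
have f_q : (minCpoly a).[q] = \prod_(b <- r) (q - b).
  by rewrite Dr horner_prod; apply: eq_bigr => b _; rewrite hornerXsubC.
have f_Nq : (minCpoly a).[- q] = - \prod_(b <- r) (q + b).
  by rewrite Dr horner_prod_XsubC_N size_r -signr_odd n_odd expr1 mulN1r.
have qZ : q \is a Num.int by rewrite rpredD ?rpred1 ?natr_int.
have int_sub : \prod_(b <- r) (q - b) \is a Num.int by rewrite -f_q rpred_horner.
have int_add : \prod_(b <- r) (q + b) \is a Num.int.
  by rewrite -[X in X \is a _]opprK -f_Nq rpredN rpred_horner ?rpredN.
have prod_sub : \prod_(b <- r) (q - b) = (p ^ n)%:R :=
  prod_dvd_pexp_eq n_gt0 p_gt2 size_r (fun b br => (near_p b br).1) pp
    (fun b br => (dvd_pk b br).1) int_sub.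
have prod_add : \prod_(b <- r) (q + b) = (p ^ n)%:R :=
  prod_dvd_pexp_eq n_gt0 p_gt2 size_r (fun b br => (near_p b br).2) pp
    (fun b br => (dvd_pk b br).2) int_add.
apply: (int_poly_pexp_at_pS fZ (prime_gt0 pp)).
  by rewrite -/q f_q prod_sub.
by rewrite -/q f_Nq prod_add.
Qed.

Theorem lemma2p4 (n : nat) : (0 < n)%N -> odd n ->
  exists C : int, forall (p : nat) (a : algC),
    prime p -> C < p%:Z -> fourier_coeff p a -> deg_over_Q a = n ->
    exists I : algC -> Prop,
      [/\ Zbar_maximal_ideal I,
          (exists l : nat, residue_char I l /\ l <> p) &
          I ((a + p%:R + 1) * (a - p%:R - 1))].
Proof.
move=> _ n_odd; exists (36 * n ^ 2)%N%:Z => p a pp Cp fa deg.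
rewrite ltz_nat in Cp; have [aA _ _] := fa.
have pA : (p%:R : algC) \in Aint by apply/Aint_Cnat/natr_nat.
apply: Zbar_maximal_ideal_avoiding.
- by rewrite rpredM // ?rpredB ?rpredD ?Aint1.
- exact: fourier_coeff_shift_neq0 (prime_gt1 pp) fa.
- by move=> k z; apply: fourier_coeff_shift_ndvd_pexp n_odd pp Cp fa deg.
Qed.
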